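(* Let $G$ be the three-player game with $A_i=\{a_{i1},a_{i2}\}$ for $i=1,2,3$ and fitness vectors $\pi(a_{11},a_{21},a_{31})=(7,7,7)$, $\pi(a_{11},a_{22},a_{31})=(9,6,0)$, $\pi(a_{12},a_{21},a_{31})=(6,0,9)$, $\pi(a_{12},a_{22},a_{31})=(6,0,9)$, $\pi(a_{11},a_{21},a_{32})=(0,9,6)$, $\pi(a_{11},a_{22},a_{32})=(9,6,0)$, $\pi(a_{12},a_{21},a_{32})=(0,9,6)$, $\pi(a_{12},a_{22},a_{32})=(1,1,1)$. Then the profile $(a_{11},a_{21},a_{31})$, which is a Pareto-efficient strict Nash equilibrium of $G$, is not stable under perfect observability.
   Context: Preference types: $\Theta=\mathbb{R}^A$, $A=A_1\times A_2\times A_3$ (utility functions on $A$, extended multilinearly to mixed profiles); $\pi_i$ likewise extended. $\mathcal{M}(\Theta^3)$ is the set of product distributions $\mu=\mu_1\times\mu_2\times\mu_3$ with finitely supported marginals; $\operatorname{supp}\mu=\prod_i\operatorname{supp}\mu_i$, $\mu(\theta)=\prod_i\mu_i(\theta_i)$, $\mu_{-i}(\theta_{-i})=\prod_{j\ne i}\mu_j(\theta_j)$. Mutants: for nonempty $J\subseteq N=\{1,2,3\}$, a mutant sub-profile is $\tilde\theta_J\in\prod_{j\in J}(\Theta\setminus\operatorname{supp}\mu_j)$ with shares $\varepsilon\in(0,1)^{|J|}$, $\|\varepsilon\|=\max_j\varepsilon_j$; post-entry $\tilde\mu^\varepsilon_i=(1-\varepsilon_i)\mu_i+\varepsilon_i\delta_{\tilde\theta_i}$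 for $i\in J$, $\tilde\mu^\varepsilon_i=\mu_i$ otherwise. Perfect observability: an equilibrium is a map $b:\operatorname{supp}\mu\to\prod_i\Delta(A_i)$ such that each $b(\theta)$ is a Nash equilibrium of the game with payoffs $\theta_1,\theta_2,\theta_3$; $B_1(\mu)$ is the set of these; $(\mu,b)$ is a configuration, with aggregate outcome $\varphi_{\mu,b}(a)=\sum_{\theta}\mu(\theta)\prod_i b_i(\theta)(a_i)$. Average fitness $\Pi_{\theta_i}(\mu;b)=\sum_{\theta'_{-i}}\mu_{-i}(\theta'_{-i})\pi_i(b(\theta_i,\theta'_{-i}))$. Balanced: equal average fitness of all types within each population. Focal set $B_1(\tilde\mu^\varepsilon;b)=\{\tilde b\in B_1(\tilde\mu^\varepsilon):\tilde b=b\text{ on }\operatorname{supp}\mu\}$. $(\mu,b)$ is stable if balanced and for every nonempty $J$ and every $\tilde\theta_J$ there is $\bar\epsilon\in(0,1)$ such that for all $\varepsilon$ with $\|\varepsilon\|<\bar\epsilon$ and all $\tilde b$ in the focal set, either (i) some $j\in J$ has $\Pi_{\theta_j}(\tilde\mu^\varepsilon;\tilde b)>\Pi_{\tilde\theta_j}(\tilde\mu^\varepsilon;\tilde b)$ for all $\theta_j\in\operatorname{supp}\mu_j$, or (ii) for every $i$ all types in $\operatorname{supp}\tilde\mu^\varepsilon_i$ have equal average fitness. A pure profile $a$ is stable if the point mass at $a$ is the aggregate outcome of a stable configuration. *)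

(* The real numbers are taken to be an arbitrary real closed
   field R (rcfType); the reals are an instance, so this is a generalization. *)
From HB Require Import structures.
From mathcomp Require Import all_boot all_order all_algebra.
Set Implicit Arguments. Unset Strict Implicit. Unset Printing Implicit Defensive.
Import Order.TTheory GRing.Theory Num.Theory.

(* Players 0,1,2 (= players 1,2,3 of the paper); actions 0,1 (= a_{i1}, a_{i2}). *)
Definition prof := {ffun 'I_3 -> 'I_2}.
Definition p0 : 'I_3 := @Ordinal 3 0 isT.
Definition p1 : 'I_3 := @Ordinal 3 1 isT.
Definition p2 : 'I_3 := @Ordinal 3 2 isT.

Definition nxt (i : 'I_3) : 'I_3 := inord ((i + 1) %% 3).
Definition nxt2 (i : 'I_3) : 'I_3 := inord ((i + 2) %% 3).

Definition payv (a : prof) : nat * nat * nat :=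
  match nat_of_ord (a p0), nat_of_ord (a p1), nat_of_ord (a p2) with
  | 0, 0, 0 => (7, 7, 7)
  | 0, 1, 0 => (9, 6, 0)
  | 1, 0, 0 => (6, 0, 9)
  | 1, 1, 0 => (6, 0, 9)
  | 0, 0, 1 => (0, 9, 6)
  | 0, 1, 1 => (9, 6, 0)
  | 1, 0, 1 => (0, 9, 6)
  | _, _, _ => (1, 1, 1)
  end.

Definition pi_nat (i : 'I_3) (a : prof) : nat :=
  let '(x, y, z) := payv a in nth 0 [:: x; y; z] i.

Definition astar : prof := [ffun _ => ord0].

Definition upd (a : prof) (i : 'I_3) (c : 'I_2) : prof :=
  [ffun j => if j == i then c else a j].

Local Open Scope ring_scope.

Section Game.
Variable R : rcfType.

(* preference types: utility functions on A *)
Definition Th := {ffun prof -> R}.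
Definition mixed := {ffun 'I_3 -> {ffun 'I_2 -> R}}.
Definition is_dist2 (p : {ffun 'I_2 -> R}) :=
  (forall k, 0 <= p k) /\ \sum_k p k = 1.
Definition is_mixed (s : mixed) := forall i, is_dist2 (s i).
Definition EU (u : Th) (s : mixed) : R :=
  \sum_(a : prof) (\prod_(i < 3) s i (a i)) * u a.
Definition dev (s : mixed) (i : 'I_3) (t : {ffun 'I_2 -> R}) : mixed :=
  [ffun j => if j == i then t else s j].
Definition isNE (th : {ffun 'I_3 -> Th}) (s : mixed) :=
  is_mixed s /\ forall i t, is_dist2 t -> EU (th i) (dev s i t) <= EU (th i) s.

Definition fit (i : 'I_3) : Th := [ffun a => (pi_nat i a)%:R].

(* A population state mu = mu_1 x mu_2 x mu_3 with finitely supported marginals: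
   mu_i has support s i (duplicate-free list) and weights w i t > 0 on it. *)
Definition is_pop (s : 'I_3 -> seq Th) (w : 'I_3 -> Th -> R) :=
  forall i, [/\ uniq (s i), (forall t, t \in s i -> 0 < w i t)
             & \sum_(t <- s i) w i t = 1].

Definition tprof := {ffun 'I_3 -> Th}.
Definition in_supp (s : 'I_3 -> seq Th) (th : tprof) := forall i, th i \in s i.
Definition strat := tprof -> mixed.
(* b in B_1(mu) (values outside supp mu are irrelevant) *)
Definition is_eqm (s : 'I_3 -> seq Th) (b : strat) :=
  forall th, in_supp s th -> isNE th (b th).

Definition tp3 (i : 'I_3) (t x y : Th) : tprof :=
  [ffun j => if j == i then t else if j == nxt i then x else y].

Definition avgfit (s : 'I_3 -> seq Th) (w : 'I_3 -> Th -> R) (b : strat)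
    (i : 'I_3) (t : Th) : R :=
  \sum_(x <- s (nxt i)) \sum_(y <- s (nxt2 i))
     (w (nxt i) x * w (nxt2 i) y) * EU (fit i) (b (tp3 i t x y)).

Definition balanced s w b :=
  forall i t t', t \in s i -> t' \in s i -> avgfit s w b i t = avgfit s w b i t'.

Definition ent_s (s : 'I_3 -> seq Th) (J : {set 'I_3}) (mt : tprof) (i : 'I_3) :=
  if i \in J then rcons (s i) (mt i) else s i.
Definition ent_w (w : 'I_3 -> Th -> R) (J : {set 'I_3}) (mt : tprof)
    (e : 'I_3 -> R) (i : 'I_3) (t : Th) : R :=
  if i \in J then (if t == mt i then e i else (1 - e i) * w i t) else w i t.

Definition focal (s s' : 'I_3 -> seq Th) (b b' : strat) :=
  is_eqm s' b' /\ forall th, in_supp s th -> b' th = b th.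

Definition stable s w b :=
  balanced s w b /\
  forall (J : {set 'I_3}) (mt : tprof),
    J != set0 -> (forall j, j \in J -> mt j \notin s j) ->
    exists eb : R, 0 < eb < 1 /\
      forall e : 'I_3 -> R,
        (forall j, j \in J -> 0 < e j < 1) ->
        (forall j, j \in J -> e j < eb) ->
        forall b', focal s (ent_s s J mt) b b' ->
          (exists2 j, j \in J & forall t, t \in s j ->
              avgfit (ent_s s J mt) (ent_w w J mt e) b' j (mt j)
              < avgfit (ent_s s J mt) (ent_w w J mt e) b' j t)
          \/ balanced (ent_s s J mt) (ent_w w J mt e) b'.

Definition tpf (x0 x1 x2 : Th) : tprof :=
  [ffun j : 'I_3 => if j == p0 then x0 else if j == p1 then x1 else x2].

Definition agg s w (b : strat) (a : prof) : R :=
  \sum_(x0 <- s p0) \sum_(x1 <- s p1) \sum_(x2 <- s p2)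
    (w p0 x0 * w p1 x1 * w p2 x2) * \prod_(i < 3) b (tpf x0 x1 x2) i (a i).

Definition config s w b := is_pop s w /\ is_eqm s b.

Definition stable_profile (a : prof) :=
  exists (s : 'I_3 -> seq Th) (w : 'I_3 -> Th -> R) (b : strat),
    [/\ config s w b, stable s w b
      & forall a', agg s w b a' = (if a' == a then 1 else 0)].

Definition strict_NE (a : prof) :=
  forall i (c : 'I_2), c != a i -> fit i (upd a i c) < fit i a.

Definition pareto_eff (a : prof) :=
  ~ exists a' : prof, (forall j, fit j a <= fit j a') /\ exists j, fit j a < fit j a'.

End Game.

From mathcomp Require Import all_boot all_order all_algebra.
From mathcomp Require Import ring lra.
Set Implicit Arguments. Unset Strict Implicit. Unset Printing Implicit Defensive.
Import Order.TTheory GRing.Theory Num.Theory.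
Local Open Scope ring_scope.

(* If the aggregate outcome of a configuration is the point mass at astar,
   every incumbent match plays astar. Let all three populations be invaded at
   once by indifferent mutants (constant utility, so any behaviour is an
   equilibrium for them). In a match where k is the only incumbent, let the
   mutant of population nxt k play a_1, that of nxt2 k play a_2 and k
   best-reply: whatever k does, the fitnesses are 9, 6 and 0 respectively; all
   other matches play astar. With mutant share e each mutant then earns
   e + 6 e^2 more than the incumbents of its population, so neither clause of
   stability can hold. *)

Definition o0 : 'I_2 := ord0.
Definition o1 : 'I_2 := @Ordinal 2 1 isT.

Lemma ord2P (k : 'I_2) : k = o0 \/ k = o1.
Proof. by case: k => [[|[|//]] ?]; [left | right]; apply: val_inj. Qed.

Lemma ord3P (j : 'I_3) : [\/ j = p0, j = p1 | j = p2].
Proof.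
by case: j => [[|[|[|//]]] ?]; [constructor 1 | constructor 2 | constructor 3];
  apply: val_inj.
Qed.

Lemma nxt_p0 : nxt p0 = p1. Proof. by apply: val_inj; rewrite /= inordK. Qed.
Lemma nxt_p1 : nxt p1 = p2. Proof. by apply: val_inj; rewrite /= inordK. Qed.
Lemma nxt_p2 : nxt p2 = p0. Proof. by apply: val_inj; rewrite /= inordK. Qed.
Lemma nxt2_p0 : nxt2 p0 = p2. Proof. by apply: val_inj; rewrite /= inordK. Qed.
Lemma nxt2_p1 : nxt2 p1 = p0. Proof. by apply: val_inj; rewrite /= inordK. Qed.
Lemma nxt2_p2 : nxt2 p2 = p1. Proof. by apply: val_inj; rewrite /= inordK. Qed.
Definition nxtE := (nxt_p0, nxt_p1, nxt_p2, nxt2_p0, nxt2_p1, nxt2_p2).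

Lemma nxt_nxt i : nxt (nxt i) = nxt2 i.
Proof. by case: (ord3P i) => ->; rewrite !nxtE. Qed.
Lemma nxt2_nxt i : nxt2 (nxt i) = i.
Proof. by case: (ord3P i) => ->; rewrite !nxtE. Qed.
Lemma nxt_nxt2 i : nxt (nxt2 i) = i.
Proof. by case: (ord3P i) => ->; rewrite !nxtE. Qed.
Lemma nxt2_nxt2 i : nxt2 (nxt2 i) = nxt i.
Proof. by case: (ord3P i) => ->; rewrite !nxtE. Qed.
Lemma nxt_neq i : (nxt i == i) = false.
Proof. by case: (ord3P i) => ->; rewrite !nxtE. Qed.
Lemma nxt2_neq i : (nxt2 i == i) = false.
Proof. by case: (ord3P i) => ->; rewrite !nxtE. Qed.
Lemma nxt2_neq_nxt i : (nxt2 i == nxt i) = false.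
Proof. by case: (ord3P i) => ->; rewrite !nxtE. Qed.

Lemma ord3_rotP i j : [\/ j = i, j = nxt i | j = nxt2 i].
Proof.
case: (ord3P i) => ->; case: (ord3P j) => ->; rewrite !nxtE;
  by [constructor 1 | constructor 2 | constructor 3].
Qed.

Lemma pi_astar i : pi_nat i astar = 7%N.
Proof. by case: (ord3P i) => ->; rewrite /pi_nat /payv !ffunE. Qed.

Definition lone_prof (k : 'I_3) : prof := [ffun j => if j == nxt k then o0 else o1].

Lemma pi_lone_self k c : pi_nat k (upd (lone_prof k) k c) = 0%N.
Proof.
by case: (ord3P k) => ->; case: (ord2P c) => ->; rewrite /pi_nat /payv !ffunE !nxtE.
Qed.
Lemma pi_lone_nxt i c : pi_nat i (upd (lone_prof (nxt i)) (nxt i) c) = 6%N.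
Proof.
by case: (ord3P i) => ->; case: (ord2P c) => ->; rewrite /pi_nat /payv !nxtE !ffunE !nxtE.
Qed.
Lemma pi_lone_nxt2 i c : pi_nat i (upd (lone_prof (nxt2 i)) (nxt2 i) c) = 9%N.
Proof.
by case: (ord3P i) => ->; case: (ord2P c) => ->; rewrite /pi_nat /payv !nxtE !ffunE !nxtE.
Qed.

Lemma strict_NE_astar (R : rcfType) : strict_NE R astar.
Proof.
move=> i c; rewrite !ffunE ltr_nat.
by case: (ord3P i) => ->; case: (ord2P c) => -> //= _; rewrite /pi_nat /payv !ffunE.
Qed.

Lemma pareto_eff_astar (R : rcfType) : pareto_eff R astar.
Proof.
case=> a [le_a [j]]; move: (le_a p0) (le_a p1) (le_a p2); rewrite !ffunE !ler_nat ltr_nat.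
rewrite /pi_nat /payv !ffunE.
by case: (ord2P (a p0)) => ->; case: (ord2P (a p1)) => ->; case: (ord2P (a p2)) => ->;
  case: (ord3P j) => ->.
Qed.

Section ConvexCombinations.
Variable R : numDomainType.

Lemma convex_le1 (I : eqType) (r : seq I) (W P : I -> R) :
  (forall i, i \in r -> 0 <= W i) -> (forall i, i \in r -> P i <= 1) ->
  \sum_(i <- r) W i = 1 -> \sum_(i <- r) W i * P i <= 1.
Proof.
move=> W_ge0 P_le1 sumW1; rewrite -[X in _ <= X]sumW1 -subr_ge0 -sumrB big_seq.
apply: sumr_ge0 => i ri.
by rewrite -[X in X - _]mulr1 -mulrBr mulr_ge0 ?W_ge0 ?subr_ge0 ?P_le1.
Qed.

Lemma convex_eq1 (I : eqType) (r : seq I) (W P : I -> R) :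
  (forall i, i \in r -> 0 < W i) -> (forall i, i \in r -> P i <= 1) ->
  \sum_(i <- r) W i = 1 -> \sum_(i <- r) W i * P i = 1 ->
  forall i, i \in r -> P i = 1.
Proof.
move=> W_gt0 P_le1 sumW1 sumWP1.
have gap_ge0 i : i \in r -> 0 <= W i * (1 - P i).
  by move=> ri; apply: mulr_ge0; [exact/ltW/W_gt0 | rewrite subr_ge0 P_le1].
have : \sum_(i <- r | i \in r) W i * (1 - P i) == 0.
  rewrite -big_seq; under eq_bigr do rewrite mulrBr mulr1.
  by rewrite sumrB sumW1 sumWP1 subrr.
rewrite psumr_eq0 // => /allP gap0 i ri.
by move: (gap0 i ri); rewrite ri mulf_eq0 subr_eq0 gt_eqF ?W_gt0 //= => /eqP <-.
Qed.

Lemma prodr_eq1_ile1 (I : finType) (F : I -> R) :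
  (forall i, 0 <= F i <= 1) -> \prod_i F i = 1 -> forall i, F i = 1.
Proof.
move=> F01 prod1 i; have /andP [Fi_ge0 Fi_le1] := F01 i.
apply/le_anti; rewrite Fi_le1 /=.
move: prod1; rewrite (bigD1 i) //= => <-.
by rewrite ler_piMr // ?prodr_ge0 ?prodr_ile1 // => j _; case/andP: (F01 j).
Qed.

End ConvexCombinations.

Section MixedStrategies.
Variable R : rcfType.

Definition pure (a : prof) : mixed R := [ffun i => [ffun k => (k == a i)%:R]].

Lemma is_mixed_pure a : is_mixed (pure a).
Proof.
move=> i; split=> [k|]; first by rewrite !ffunE ler0n.
by rewrite (bigD1 (a i)) //= !ffunE eqxx big1 ?addr0 // => k /negbTE; rewrite !ffunE => ->.
Qed.

Lemma is_mixed_dev (s : mixed R) i t : is_mixed s -> is_dist2 t -> is_mixed (dev s i t).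
Proof. by move=> s_mixed t_dist j; rewrite ffunE; case: eqP. Qed.

Lemma dist2E (p : {ffun 'I_2 -> R}) :
  is_dist2 p -> [/\ 0 <= p o0, 0 <= p o1 & p o0 + p o1 = 1].
Proof.
case=> p_ge0 <-; split=> //; rewrite big_ord_recr big_ord1 /=.
by congr (p _ + p _); apply: val_inj.
Qed.

Lemma dist2_le1 (p : {ffun 'I_2 -> R}) k : is_dist2 p -> p k <= 1.
Proof.
by case/dist2E=> p0_ge0 p1_ge0 <-; case: (ord2P k) => ->; rewrite ?lerDl ?lerDr.
Qed.

Lemma prod_dev_pure (a a' : prof) i (t : {ffun 'I_2 -> R}) :
  \prod_(j < 3) dev (pure a) i t j (a' j) = t (a' i) * (a' == upd a i (a' i))%:R.
Proof.
rewrite (bigD1 i) //= ffunE eqxx; congr (_ * _).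
have [eq_a' | neq_a'] := eqVneq a' (upd a i (a' i)).
  by apply: big1 => j /negbTE ji; rewrite eq_a' !ffunE ji !ffunE eqxx.
have [j] : exists j, a' j != upd a i (a' i) j.
  apply/existsP; apply: contraR neq_a' => /existsPn eq_a'.
  by apply/eqP/ffunP => j; apply/eqP/negPn.
rewrite ffunE; have [-> | /negbTE ji a'j] := eqVneq j i; first by rewrite eqxx.
by rewrite (bigD1 j) ?ji //= !ffunE ji !ffunE; move/negbTE: a'j => ->; rewrite mul0r.
Qed.

Lemma EU_dev_pure (u : Th R) (a : prof) i (t : {ffun 'I_2 -> R}) :
  EU u (dev (pure a) i t) = t o0 * u (upd a i o0) + t o1 * u (upd a i o1).
Proof.
rewrite /EU; under eq_bigr do rewrite prod_dev_pure.
have neq01 : upd a i o1 != upd a i o0 by apply/eqP => /ffunP /(_ i); rewrite !ffunE eqxx.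
rewrite (bigD1 (upd a i o0)) // (bigD1 (upd a i o1)) //= !ffunE !eqxx !mulr1.
rewrite big1 ?addr0 // => a' /andP [ne1 ne0].
have [eq_a' | _] := eqVneq a' (upd a i (a' i)); last by rewrite mulr0 mul0r.
by case: (ord2P (a' i)) eq_a' => -> eq_a'; rewrite -eq_a' eqxx in ne0 ne1.
Qed.

Lemma EU_pure (u : Th R) (a : prof) : EU u (pure a) = u a.
Proof.
have -> : pure a = dev (pure a) p0 (pure a p0).
  by apply/ffunP => j; rewrite [RHS]ffunE; case: eqP => [->|].
rewrite EU_dev_pure !ffunE.
have upd_a : upd a p0 (a p0) = a by apply/ffunP => j; rewrite ffunE; case: eqP => [->|].
by case: (ord2P (a p0)) => a0; rewrite -a0 upd_a eqxx a0 /= mul1r mul0r ?addr0 ?add0r.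
Qed.

Lemma EU_const (c : R) (s : mixed R) : is_mixed s -> EU [ffun _ => c] s = c.
Proof.
move=> s_mixed; rewrite /EU; under eq_bigr do rewrite ffunE.
rewrite -big_distrl /= -(bigA_distr_bigA (fun i k => s i k)) /=.
by rewrite big1 ?mul1r // => i _; case: (s_mixed i).
Qed.

Definition best_reply (u : Th R) (i : 'I_3) (a : prof) : 'I_2 :=
  if u (upd a i o1) <= u (upd a i o0) then o0 else o1.

Lemma EU_dev_best_reply u i a t : is_dist2 t ->
  EU u (dev (pure (upd a i (best_reply u i a))) i t)
  <= EU u (pure (upd a i (best_reply u i a))).
Proof.
have upd_upd c d : upd (upd a i c) i d = upd a i d.
  by apply/ffunP => j; rewrite !ffunE; case: eqP.
case/dist2E=> t0_ge0 t1_ge0 t_sum1; rewrite EU_dev_pure EU_pure !upd_upd /best_reply.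
case: ifP => [le10 | /negbT]; last rewrite -ltNge => lt01.
- have : 0 <= t o1 * (u (upd a i o0) - u (upd a i o1)) by rewrite mulr_ge0 ?subr_ge0.
  nra.
- have : 0 <= t o0 * (u (upd a i o1) - u (upd a i o0)) by rewrite mulr_ge0 // subr_ge0 ltW.
  nra.
Qed.

Lemma mixed_ile1 (sg : mixed R) : is_mixed sg -> forall i k, 0 <= sg i k <= 1.
Proof. by move=> sg_mixed i k; case: (sg_mixed i) => ge0 _; rewrite ge0 dist2_le1. Qed.

Lemma pure_of_prod_eq1 (sg : mixed R) (a : prof) :
  is_mixed sg -> \prod_i sg i (a i) = 1 -> sg = pure a.
Proof.
move=> sg_mixed /(prodr_eq1_ile1 (fun i => mixed_ile1 sg_mixed i (a i))) sg_a1.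
apply/ffunP => i; apply/ffunP => k; rewrite !ffunE.
have [-> | neq_k] := eqVneq k (a i); first by rewrite sg_a1.
have [_ _ sum1] := dist2E (sg_mixed i); move: (sg_a1 i); rewrite mulr0n.
by case: (ord2P k) neq_k => ->; case: (ord2P (a i)) => -> // _ a1; lra.
Qed.

End MixedStrategies.
Arguments pure {R} a.

Lemma tpf_eta (R : rcfType) (th : tprof R) : th = tpf (th p0) (th p1) (th p2).
Proof. by apply/ffunP => j; rewrite ffunE; case: (ord3P j) => ->. Qed.

Section Configuration.
Variable R : rcfType.
Variables (s : 'I_3 -> seq (Th R)) (w : 'I_3 -> Th R -> R) (b : strat R).
Hypotheses (s_pop : is_pop s w) (b_eqm : is_eqm s b).

Lemma sum_w1 j : \sum_(t <- s j) w j t = 1.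
Proof. by case: (s_pop j). Qed.

Lemma w_gt0 j t : t \in s j -> 0 < w j t.
Proof. by case: (s_pop j) => _ + _; apply. Qed.

Lemma in_supp_tpf x0 x1 x2 :
  x0 \in s p0 -> x1 \in s p1 -> x2 \in s p2 -> in_supp s (tpf x0 x1 x2).
Proof. by move=> ? ? ? j; rewrite ffunE; case: (ord3P j) => ->. Qed.

Lemma agg_eq1_pure a : agg s w b a = 1 -> forall th, in_supp s th -> b th = pure a.
Proof.
move=> agg1 th th_s; have [th_mixed _] := b_eqm th_s; apply: pure_of_prod_eq1 => //.
(* agg is a threefold nested convex combination of the P's, all at most 1;
   peel off one layer at a time. *)
pose P x0 x1 x2 := \prod_i b (tpf x0 x1 x2) i (a i).
pose Q2 x0 x1 := \sum_(x2 <- s p2) w p2 x2 * P x0 x1 x2.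
pose Q1 x0 := \sum_(x1 <- s p1) w p1 x1 * Q2 x0 x1.
have w_ge0 j t : t \in s j -> 0 <= w j t by move/w_gt0/ltW.
have P_le1 x0 x1 x2 : x0 \in s p0 -> x1 \in s p1 -> x2 \in s p2 -> P x0 x1 x2 <= 1.
  move=> s0 s1 s2; have [sg_mixed _] := b_eqm (in_supp_tpf s0 s1 s2).
  by apply: prodr_ile1 => i _; apply: mixed_ile1.
have Q2_le1 x0 x1 : x0 \in s p0 -> x1 \in s p1 -> Q2 x0 x1 <= 1.
  by move=> s0 s1; apply: convex_le1 (sum_w1 p2) => x2 s2; [apply: w_ge0 | apply: P_le1].
have Q1_le1 x0 : x0 \in s p0 -> Q1 x0 <= 1.
  by move=> s0; apply: convex_le1 (sum_w1 p1) => x1 s1; [apply: w_ge0 | apply: Q2_le1].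
have sum_Q1 : \sum_(x0 <- s p0) w p0 x0 * Q1 x0 = 1.
  rewrite -agg1; apply: eq_bigr => x0 _; rewrite big_distrr; apply: eq_bigr => x1 _ /=.
  by rewrite /Q2 !big_distrr; apply: eq_bigr => x2 _ /=; rewrite !mulrA.
have th0 := th_s p0; have th1 := th_s p1; have th2 := th_s p2.
have Q1_1 : Q1 (th p0) = 1.
  by apply: (convex_eq1 (@w_gt0 p0) Q1_le1 (sum_w1 p0) sum_Q1).
have Q2_1 : Q2 (th p0) (th p1) = 1.
  by apply: (convex_eq1 (@w_gt0 p1) (fun x1 => Q2_le1 _ x1 th0) (sum_w1 p1) Q1_1).
rewrite (tpf_eta th).
by apply: (convex_eq1 (@w_gt0 p2) (fun x2 => P_le1 _ _ x2 th0 th1) (sum_w1 p2) Q2_1).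
Qed.

Section Invasion.
Hypothesis b_astar : forall th, in_supp s th -> b th = pure astar.

Definition mutant : tprof R :=
  [ffun j => [ffun _ => 1 + \sum_(t <- s j) `|t astar|]].

Lemma mutant_notin j : mutant j \notin s j.
Proof.
apply/negP => mut_in; have [s_uniq _ _] := s_pop j.
have : `|mutant j astar| <= \sum_(t <- s j) `|t astar|.
  by rewrite (bigD1_seq _ mut_in s_uniq) /= lerDl sumr_ge0.
by rewrite !ffunE ger0_norm ?addr_ge0 ?sumr_ge0 // gerDr ler10.
Qed.

Lemma eq_mutant_in j t : t \in s j -> (t == mutant j) = false.
Proof. by apply: contraTF => /eqP ->; apply: mutant_notin. Qed.

Definition some_incumbent j := head (mutant j) (s j).

Lemma some_incumbent_in j : some_incumbent j \in s j.
Proof.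
rewrite /some_incumbent; have := sum_w1 j.
by case: (s j) => [|x r]; rewrite ?mem_head // big_nil => /eqP; rewrite eq_sym oner_eq0.
Qed.

Lemma EU_dev_astar i u t : u \in s i -> is_dist2 t ->
  EU u (dev (pure astar) i t) <= EU u (pure astar).
Proof.
move=> u_in t_dist.
pose th : tprof R := [ffun j => if j == i then u else some_incumbent j].
have th_in : in_supp s th.
  by move=> j; rewrite ffunE; case: eqP => [-> // | _]; apply: some_incumbent_in.
have [_ th_NE] := b_eqm th_in.
by move: (th_NE i t t_dist); rewrite b_astar // ffunE eqxx.
Qed.

Definition is_mutant (th : tprof R) j := th j == mutant j.

Definition lone_incumbent th k :=
  [&& ~~ is_mutant th k, is_mutant th (nxt k) & is_mutant th (nxt2 k)].

Lemma lone_incumbent_nxt th i : lone_incumbent th (nxt i) =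
  [&& ~~ is_mutant th (nxt i), is_mutant th (nxt2 i) & is_mutant th i].
Proof. by rewrite /lone_incumbent nxt_nxt nxt2_nxt. Qed.

Lemma lone_incumbent_nxt2 th i : lone_incumbent th (nxt2 i) =
  [&& ~~ is_mutant th (nxt2 i), is_mutant th i & is_mutant th (nxt i)].
Proof. by rewrite /lone_incumbent nxt_nxt2 nxt2_nxt2. Qed.

Lemma lone_incumbent_nonmutant th k i :
  lone_incumbent th k -> ~~ is_mutant th i -> i = k.
Proof.
move=> /and3P [_ mut_nxt mut_nxt2].
by case: (ord3_rotP k i) => -> //; rewrite ?mut_nxt ?mut_nxt2.
Qed.

Definition post_prof th : prof :=
  if [pick k | lone_incumbent th k] is Some k
  then upd (lone_prof k) k (best_reply (th k) k (lone_prof k)) else astar.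

Definition post_strat : strat R := fun th => pure (post_prof th).

Lemma post_prof_lone th k : lone_incumbent th k ->
  post_prof th = upd (lone_prof k) k (best_reply (th k) k (lone_prof k)).
Proof.
move=> lone_k; rewrite /post_prof; case: pickP => [k' /and3P [inc_k' _ _] | ].
  by rewrite (lone_incumbent_nonmutant lone_k inc_k').
by move/(_ k); rewrite lone_k.
Qed.

Lemma post_prof_none th : (forall k, ~~ lone_incumbent th k) -> post_prof th = astar.
Proof.
by move=> no_lone; rewrite /post_prof; case: pickP => // k; rewrite (negbTE (no_lone k)).
Qed.

Lemma focal_post_strat : focal s (ent_s s setT mutant) b post_strat.
Proof.
split=> th th_in; last first.
  rewrite b_astar // /post_strat post_prof_none // => k.
  by rewrite /lone_incumbent /is_mutant (eq_mutant_in (th_in (nxt k))) andbF.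
have post_mixed : is_mixed (post_strat th) by apply: is_mixed_pure.
split=> // i t t_dist; have [mut_i | inc_i] := boolP (is_mutant th i).
  by rewrite (eqP mut_i) ffunE !EU_const //; apply: is_mixed_dev.
have thi_in : th i \in s i.
  move: (th_in i) inc_i; rewrite /ent_s /is_mutant in_setT mem_rcons in_cons.
  by case/orP => [-> |].
rewrite /post_strat /post_prof; case: pickP => [k lone_k | _]; last exact: EU_dev_astar.
by rewrite (lone_incumbent_nonmutant lone_k inc_i); apply: EU_dev_best_reply.
Qed.

Definition fitness_table (mut_i mut_nxt mut_nxt2 : bool) : nat :=
  if mut_i then
    if mut_nxt then (if mut_nxt2 then 7 else 9) else (if mut_nxt2 then 6 else 7)
  else if mut_nxt && mut_nxt2 then 0 else 7.

Lemma pi_post_prof i th : pi_nat i (post_prof th) =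
  fitness_table (is_mutant th i) (is_mutant th (nxt i)) (is_mutant th (nxt2 i)).
Proof.
have lone_i : lone_incumbent th i =
  [&& ~~ is_mutant th i, is_mutant th (nxt i) & is_mutant th (nxt2 i)] by [].
have lone_nxt := lone_incumbent_nxt th i; have lone_nxt2 := lone_incumbent_nxt2 th i.
case mi: (is_mutant th i); case mx: (is_mutant th (nxt i)); case my: (is_mutant th (nxt2 i));
  rewrite mi mx my /= in lone_i lone_nxt lone_nxt2;
  first [ by rewrite (post_prof_lone lone_i) pi_lone_self
        | by rewrite (post_prof_lone lone_nxt) pi_lone_nxt
        | by rewrite (post_prof_lone lone_nxt2) pi_lone_nxt2
        | rewrite post_prof_none ?pi_astar // => k;
          by case: (ord3_rotP i k) => ->; rewrite ?lone_i ?lone_nxt ?lone_nxt2 ].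
Qed.

Lemma EU_fit_post i t x y : EU (fit R i) (post_strat (tp3 i t x y)) =
  (fitness_table (t == mutant i) (x == mutant (nxt i)) (y == mutant (nxt2 i)))%:R.
Proof.
have tp3_i : tp3 i t x y i = t by rewrite ffunE eqxx.
have tp3_nxt : tp3 i t x y (nxt i) = x by rewrite ffunE nxt_neq eqxx.
have tp3_nxt2 : tp3 i t x y (nxt2 i) = y by rewrite ffunE nxt2_neq nxt2_neq_nxt.
by rewrite EU_pure ffunE pi_post_prof /is_mutant tp3_i tp3_nxt tp3_nxt2.
Qed.

Section PostEntry.
Variable e : R.
Hypothesis e_gt0 : 0 < e.
Let s' := ent_s s setT mutant.
Let w' := ent_w w setT mutant (fun _ => e).

Lemma sum_post_entry k l (F : Th R -> Th R -> R) (A B C D : R) :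
  (forall x y, x \in s k -> y \in s l -> F x y = A) ->
  (forall x, x \in s k -> F x (mutant l) = B) ->
  (forall y, y \in s l -> F (mutant k) y = C) -> F (mutant k) (mutant l) = D ->
  \sum_(x <- s' k) \sum_(y <- s' l) (w' k x * w' l y) * F x y =
  (1 - e) * (1 - e) * A + (1 - e) * e * B + e * (1 - e) * C + e * e * D.
Proof.
have s'E j : s' j = rcons (s j) (mutant j) by rewrite /s' /ent_s in_setT.
have w'E j t : w' j t = if t == mutant j then e else (1 - e) * w j t.
  by rewrite /w' /ent_w in_setT.
have avg j (G : Th R -> R) c : (forall y, y \in s j -> G y = w j y * c) ->
    \sum_(y <- s j) G y = c.
  move=> Gc; rewrite -[RHS]mul1r -(sum_w1 j) big_distrl /= !big_seq.
  by apply: eq_bigr => y /Gc.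
move=> FA FB FC FD.
have inner x : \sum_(y <- s' l) (w' k x * w' l y) * F x y =
    w' k x * ((1 - e) * \sum_(y <- s l) w l y * F x y + e * F x (mutant l)).
  rewrite s'E big_rcons /= (w'E l) eqxx mulrDr; congr (_ + _); last by rewrite mulrA.
  rewrite !big_distrr /= !big_seq; apply: eq_bigr => y sy.
  by rewrite (w'E l y) eq_mutant_in //; ring.
rewrite s'E big_rcons /= inner (w'E k) eqxx FD (avg l _ C); last by move=> y /FC ->.
rewrite (avg k _ ((1 - e) * ((1 - e) * A + e * B))); first ring.
move=> x sx; rewrite inner (w'E k) eq_mutant_in // FB // (avg l _ A); first ring.
by move=> y /(FA x y sx) ->.
Qed.

Lemma avgfit_mutant_gt i t : t \in s i ->
  avgfit s' w' post_strat i t < avgfit s' w' post_strat i (mutant i).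
Proof.
move=> t_in; rewrite /avgfit.
rewrite (@sum_post_entry _ _ _ 7 7 7 0) ?(@sum_post_entry _ _ _ 7 6 9 7);
  try by move=> *; rewrite EU_fit_post ?eqxx ?eq_mutant_in.
rewrite -subr_gt0.
have -> : (1 - e) * (1 - e) * 7 + (1 - e) * e * 6 + e * (1 - e) * 9 + e * e * 7
  - ((1 - e) * (1 - e) * 7 + (1 - e) * e * 7 + e * (1 - e) * 7 + e * e * 0)
  = e + 6 * (e * e) by ring.
by rewrite addr_gt0 ?mulr_gt0.
Qed.

End PostEntry.
End Invasion.
End Configuration.

Theorem mainTheorem8 (R : rcfType) :
  [/\ strict_NE R astar, pareto_eff R astar & ~ stable_profile R astar].
Proof.
split; [exact: strict_NE_astar | exact: pareto_eff_astar |].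
move=> [s [w [b [[s_pop b_eqm] [_ b_stable] agg_astar]]]].
have agg1 : agg s w b astar = 1 by rewrite agg_astar eqxx.
have b_astar := agg_eq1_pure s_pop b_eqm agg1.
have all_nonempty : [set: 'I_3] != set0 by apply/set0Pn; exists p0.
have [eb [/andP [eb_gt0 eb_lt1] invasion]] :=
  b_stable _ (mutant s) all_nonempty (fun j _ => mutant_notin s_pop j).
pose e := eb / 2.
have e_gt0 : 0 < e by rewrite divr_gt0.
have e_lt_eb : e < eb by rewrite ltr_pdivrMr // ltr_pMr // ltr1n.
have e_01 : 0 < e < 1 by rewrite e_gt0 (lt_trans e_lt_eb eb_lt1).
have mutant_gt j := avgfit_mutant_gt s_pop e_gt0 (some_incumbent_in s_pop j).
case: (invasion (fun _ => e) (fun _ _ => e_01) (fun _ _ => e_lt_eb) _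
         (focal_post_strat s_pop b_eqm b_astar)) => [[j _ incumbent_gt] | balanced_post].
  have := incumbent_gt _ (some_incumbent_in s_pop j).
  by rewrite ltNge ltW ?mutant_gt.
have := mutant_gt p0; rewrite (balanced_post p0 (mutant s p0) (some_incumbent s p0)) ?ltxx //.
  by rewrite /ent_s in_setT mem_rcons mem_head.
by rewrite /ent_s in_setT mem_rcons in_cons (some_incumbent_in s_pop) orbT.
Qed.
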